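(* Let $\Sigma,O$ be nominal $\mathrm{Sb}$-sets with $\dim(\Sigma)\le1$. Let $\mathcal{A}=(Q,\delta,o,q_0)$ be a nominal automaton with input alphabet $U\Sigma$ and output alphabet $UO$, and let $L\colon\Sigma^*\to O$ be the language accepted by $\mathcal{A}$. Suppose $L$ is $\mathrm{Sb}$-equivariant. Let $S\colon(U\Sigma)^{( * )}\to UO$ be the separated language accepted by the separated automaton $\mathcal{A}_*$. Then $L=\overline{S}$, where $\overline{S}\colon\Sigma^*\to O$ is the unique $\mathrm{Sb}$-equivariant function whose restriction to separated words is $S$.
   Context: Atoms $\mathbb{A}$ (countably infinite); $\mathrm{Sb}$ = monoid of functions $\mathbb{A}\to\mathbb{A}$ that are the identity outside a finite set; $\mathrm{Perm}$ its bijections. For $M\in\{\mathrm{Sb},\mathrm{Perm}\}$ a nominal $M$-set is an $M$-set whose elements $x$ have finite supports $C$ ($m_1|_C=m_2|_C\Rightarrow m_1x=m_2x$, $m_i\in M$); $\mathrm{supp}(x)$ is the least one; $\dim(X)=\max_x|\mathrm{supp}(x)|$. $U$ restricts $\mathrm{Sb}$-actions to $\mathrm{Perm}$. $x\perp y$ means disjoint supports; $A\otimes B=\{(a,b)\mid a\perp b\}$. $\Sigma^*$ is the set of words with pointwise action; $(U\Sigma)^{( * )}$ is the set of separated words (letters with pairwise disjoint supports). A nominal automaton $(Q,\delta,o,q_0)$ over input $\Sigma'$ and output $O'$ (nominal $\mathrm{Perm}$-sets) consists of a nominal $\mathrm{Perm}$-set $Q$, equivariant $\delta\colon Q\times\Sigma'\to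 Q$, equivariant $o\colon Q\to O'$, and $q_0\in Q$ with empty support; its semantics $l(x,\varepsilon)=o(x)$, $l(x,aw)=l(\delta(x,a),w)$, and its accepted language is $w\mapsto l(q_0,w)$. The separated automaton $\mathcal{A}_*=(Q,\delta|_{Q\otimes\Sigma'},o,q_0)$ has separated semantics $s$, defined on pairs $(x,w)$ with $w$ a separated word and $x\perp w$, by $s(x,\varepsilon)=o(x)$ and $s(x,aw)=s(\delta(x,a),w)$ whenever $x\perp aw$ and $a\perp w$; its accepted separated language is $w\mapsto s(q_0,w)$ on separated words. (A unique $\mathrm{Sb}$-equivariant extension $\overline{S}$ of any $\mathrm{Perm}$-equivariant $S\colon(U\Sigma)^{( * )}\to UO$ exists when $\dim\Sigma\le1$.) *)

From mathcomp Require Import all_boot.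
From Stdlib Require Import List.
Set Implicit Arguments. Unset Strict Implicit. Unset Printing Implicit Defensive.

Definition atom := nat.

Definition isSb (f : atom -> atom) : Prop :=
  exists F : list atom, forall a, ~ List.In a F -> f a = a.

Definition isPerm (f : atom -> atom) : Prop := isSb f /\ bijective f.

Lemma isPerm_isSb f : isPerm f -> isSb f. Proof. by case. Qed.

Definition supports (M : (atom -> atom) -> Prop) (X : Type)
  (act : (atom -> atom) -> X -> X) (C : list atom) (x : X) : Prop :=
  forall m1 m2, M m1 -> M m2 ->
    (forall a, List.In a C -> m1 a = m2 a) -> act m1 x = act m2 x.

Definition least_supp (M : (atom -> atom) -> Prop) (X : Type)
  (act : (atom -> atom) -> X -> X) (x : X) (C : list atom) : Prop :=
  supports M act C x /\
  forall D, supports M act D x -> forall a, List.In a C -> List.In a D.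

Record MSet (M : (atom -> atom) -> Prop) := {
  car :> Type;
  act : (atom -> atom) -> car -> car;
  act_id : forall x, act (fun a => a) x = x;
  act_comp : forall f g x, M f -> M g -> act (f \o g) x = act f (act g x);
  act_nominal : forall x : car, exists C, supports M act C x
}.
Arguments act {M} _ _ _.

Definition SbSet := MSet isSb.
Definition PermSet := MSet isPerm.

Definition U (X : SbSet) : PermSet.
Proof.
refine (@Build_MSet isPerm (car X) (act X) (@act_id _ X) _ _).
- by move=> f g x /isPerm_isSb Hf /isPerm_isSb Hg; apply: act_comp.
- move=> x; have [C HC] := act_nominal x; exists C.
  by move=> m1 m2 /isPerm_isSb H1 /isPerm_isSb H2; apply: HC.
Defined.

Definition dim_le1 M (X : MSet M) : Prop :=
  forall (x : X) C, least_supp M (act X) x C ->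
    forall a b, List.In a C -> List.In b C -> a = b.

Definition perp M (X Y : MSet M) (x : X) (y : Y) : Prop :=
  forall Cx Cy, least_supp M (act X) x Cx -> least_supp M (act Y) y Cy ->
    forall a, List.In a Cx -> ~ List.In a Cy.

Fixpoint separated M (X : MSet M) (w : list X) : Prop :=
  match w with
  | nil => True
  | a :: w' => (forall b, List.In b w' -> perp a b) /\ separated w'
  end.

Definition equivariant M (X Y : MSet M) (f : X -> Y) : Prop :=
  forall m x, M m -> f (act X m x) = act Y m (f x).
Definition equivariant2 M (X Y Z : MSet M) (f : X -> Y -> Z) : Prop :=
  forall m x y, M m -> f (act X m x) (act Y m y) = act Z m (f x y).

Definition word_equivariant M (X Y : MSet M) (f : list X -> Y) : Prop :=
  forall m w, M m -> f (map (act X m) w) = act Y m (f w).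

Fixpoint lsem (Q S O : Type) (delta : Q -> S -> Q) (o : Q -> O)
  (x : Q) (w : list S) : O :=
  match w with
  | nil => o x
  | a :: w' => lsem delta o (delta x a) w'
  end.

(* separated semantics s(x, w) of A_* : the same recursion
   s(x,ε)=o(x), s(x,aw)=s(δ(x,a),w), only consulted on separated w with x ⊥ w. *)
Fixpoint ssem (Q S O : Type) (delta : Q -> S -> Q) (o : Q -> O)
  (x : Q) (w : list S) : O :=
  match w with
  | nil => o x
  | a :: w' => ssem delta o (delta x a) w'
  end.

(** Every word over Σ is the image, under a single substitution in Sb, of a
    separated word: rename the support of each letter apart from the supports
    of the later letters, and let one substitution undo all the renamings.
    Both L and S̄ are Sb-equivariant, and on separated words S̄ is S, which is
    computed by the same recursion as L; hence L and S̄ agree everywhere.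
    The bound dim Σ ≤ 1 only serves to make S̄ exist, and S̄ is given here. *)

From mathcomp Require Import all_boot.
From Stdlib Require Import List.

Set Implicit Arguments.
Unset Strict Implicit.
Unset Printing Implicit Defensive.

Lemma InP (T : eqType) (x : T) (s : list T) : reflect (List.In x s) (x \in s).
Proof.
elim: s => [|y s IH] /=; first by right.
rewrite seq.in_cons; apply: (iffP orP) => [[/eqP ->|/IH]|[->|/IH]]; auto.
Qed.

Lemma isSb_comp f g : isSb f -> isSb g -> isSb (f \o g).
Proof.
move=> [F HF] [G HG]; exists (F ++ G) => a Ha /=.
by rewrite HG ?HF // => H; apply: Ha; apply: in_or_app; [left|right].
Qed.

Lemma shift_apart (C B : list atom) (m' : atom -> atom) : isSb m' ->
  exists tau m, [/\ isSb tau, isSb m,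
    forall c, List.In c C -> m (tau c) = c,
    forall a, List.In a B -> m a = m' a &
    forall c, List.In c C -> ~ List.In (tau c) B].
Proof.
move=> [F HF].
pose N := (\max_(b <- B) b).+1.
have B_lt_N a : List.In a B -> a < N by move=> /InP aB; rewrite ltnS leq_bigmax_seq.
pose tau a := if a \in C then N + a else a.
pose m a := if (N <= a) && (a - N \in C) then a - N else m' a.
exists tau, m; split.
- by exists C => a /InP /negbTE aC; rewrite /tau aC.
- exists (F ++ map (addn N) C) => a Ha; rewrite /m.
  case: ifP => [/andP [leNa /InP aC]|_].
    case: Ha; apply: in_or_app; right.
    by apply/in_map_iff; exists (a - N); rewrite subnKC.
  by apply: HF => aF; apply: Ha; apply: in_or_app; left.
- by move=> c /InP cC; rewrite /m /tau cC leq_addr addKn cC.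
- by move=> a /B_lt_N; rewrite /m ltnNge => /negbTE ->.
- by move=> c /InP cC /B_lt_N; rewrite /tau cC ltnNge leq_addr.
Qed.

Lemma supports_subset M (X : MSet M) (C D : list atom) (x : X) :
  (forall a, List.In a C -> List.In a D) ->
  supports M (act X) C x -> supports M (act X) D x.
Proof. by move=> CD HC m1 m2 H1 H2 Hag; apply: HC => // a /CD; apply: Hag. Qed.

Lemma perp_disjoint_supports M (X Y : MSet M) (x : X) (y : Y) Cx Cy :
  supports M (act X) Cx x -> supports M (act Y) Cy y ->
  (forall a, List.In a Cx -> ~ List.In a Cy) -> perp x y.
Proof.
move=> Hx Hy disj Dx Dy [_ Dx_least] [_ Dy_least] a aDx aDy.
exact: disj (Dx_least _ Hx a aDx) (Dy_least _ Hy a aDy).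
Qed.

Lemma supports_U (X : SbSet) (C : list atom) (x : X) :
  supports isSb (act X) C x -> supports isPerm (act (U X)) C x.
Proof. by move=> HC m1 m2 /isPerm_isSb H1 /isPerm_isSb H2; apply: HC. Qed.

Section SbSupports.

Variable X : SbSet.

Lemma supports_act (g : atom -> atom) (C : list atom) (x : X) : isSb g ->
  supports isSb (act X) C x -> supports isSb (act X) (map g C) (act X g x).
Proof.
move=> Hg HC m1 m2 H1 H2 Hag; rewrite -!act_comp //.
apply: HC; try exact: isSb_comp.
by move=> c Hc; apply: Hag; apply: in_map.
Qed.

Lemma supports_fixed (m : atom -> atom) (C : list atom) (x : X) : isSb m ->
  supports isSb (act X) C x -> (forall c, List.In c C -> m c = c) ->
  act X m x = x.
Proof. by move=> Hm HC fixC; rewrite -[RHS]act_id; apply: HC => //; exists nil. Qed.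

Lemma separated_preimage_supported (w : list X) :
  exists (w' : list X) m B, [/\ isSb m, map (act X m) w' = w,
    separated (X := U X) w' &
    forall y, List.In y w' -> supports isSb (act X) B y].
Proof.
elim: w => [|x w [w' [m' [B [Hm' <- sep_w' HB]]]]].
  by exists nil, id, nil; split=> //; exists nil.
have [C HC] := act_nominal x.
have [tau [m [Htau Hm mtau mB tau_apart]]] := shift_apart C B Hm'.
have Hx' := supports_act Htau HC.
exists (act X tau x :: w'), m, (map tau C ++ B); split=> //=.
- congr cons.
    by rewrite -act_comp // (supports_fixed (isSb_comp Hm Htau) HC).
  by apply: map_ext_in => y /HB HBy; apply: HBy => // a /mB.
- split=> // y /HB HBy.
  apply: perp_disjoint_supports (supports_U Hx') (supports_U HBy) _.
  by move=> _ /in_map_iff [c [<- /tau_apart]].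
- move=> y [<-|/HB HBy]; [apply: supports_subset _ Hx' | apply: supports_subset _ HBy];
    by move=> a Ha; apply: in_or_app; auto.
Qed.

Lemma separated_preimage (w : list X) :
  exists m (w' : list X), [/\ isSb m, separated (X := U X) w' &
    map (act X m) w' = w].
Proof.
by have [w' [m [_ [Hm Hmap Hsep _]]]] := separated_preimage_supported w; exists m, w'.
Qed.

End SbSupports.

Lemma ssem_lsem (Q S O : Type) (delta : Q -> S -> Q) (o : Q -> O) :
  ssem delta o =2 lsem delta o.
Proof. by move=> x w; elim: w x => //= a w IH x; rewrite IH. Qed.

Theorem mainTheorem10
  (Sigma O : SbSet) (hdim : dim_le1 Sigma)
  (Q : PermSet)
  (delta : Q -> U Sigma -> Q) (o : Q -> U O) (q0 : Q)
  (hdelta : equivariant2 delta) (ho : equivariant o)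
  (hq0 : supports isPerm (act Q) nil q0)
  (hL : word_equivariant (X:=Sigma) (Y:=O) (fun w => lsem delta o q0 w))
  (Sbar : list Sigma -> O)
  (hSbar_eq : word_equivariant Sbar)
  (hSbar_ext : forall w : list (U Sigma), separated w ->
                 Sbar w = ssem delta o q0 w) :
  forall w : list Sigma, lsem delta o q0 w = Sbar w.
Proof.
move=> w; have [m [w' [Hm Hsep <-]]] := separated_preimage w.
by rewrite (hL m w' Hm) (hSbar_eq m w' Hm) (hSbar_ext w' Hsep) ssem_lsem.
Qed.
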